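(* Consider markets with scalar single-parameter valuations: $n$ agents, an unlimited supply of a good (at most one copy per agent), agent $i$ has private type $t_i\in[0,\infty)$ and valuation $v_i(t_i,S)=t_i\,w_i(S)$ for winning sets $S\subseteq[n]$, with publicly known $w_i:2^{[n]}\to\mathbb{R}_{\ge0}$, $w_i(S)=0$ for $i\notin S$, and such that each $v_i(t_i,\cdot)$ is monotone ($v_i(t_i,S)\le v_i(t_i,R)$ for $S\subseteq R$) and subadditive ($v_i(t_i,S\cup R)\le v_i(t_i,S)+v_i(t_i,R)$ whenever $i\in S\cap R$). Then there is no universally truthful mechanism achieving a constant approximation ratio with respect to $\mathcal{F}^{(2)}$: for every constant $\alpha\ge1$ there exist $n$ and such public functions $w_1,\dots,w_n$ such that no universally truthful mechanism $\mathcal{M}$ satisfies $\mathbb{E}[\mathrm{Rev}_{\mathcal{M}}(t)]\ge \mathcal{F}^{(2)}(t)/\alpha$ for all $t\in[0,\infty)^n$.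
   Context: A deterministic mechanism maps the reported type vector $t$ to a winning set $S$ and prices $p_i$ for $i\in S$ (agents outside $S$ pay $0$); agent $i$'s utility is $v_i(t_i,S)-p_i$ if $i\in S$ and $0$ otherwise, and $\mathrm{Rev}$ is $\sum_{i\in S}p_i$. It is truthful if for every $i$ and every fixed reports of the others, reporting the true type maximizes $i$'s utility, and individually rational (voluntary participation) if truthful agents always have nonnegative utility. A universally truthful mechanism is a probability distribution over deterministic truthful, individually rational mechanisms. $\mathcal{F}^{(2)}(t)=\max\{c|S| : c\ge0,\ S\subseteq[n],\ |S|\ge 2,\ v_i(t_i,S)\ge c\ \forall i\in S\}$. *)

From HB Require Import structures.
From mathcomp Require Import all_boot all_order all_algebra.
From mathcomp Require Import all_classical all_reals all_analysis.
Set Implicit Arguments. Unset Strict Implicit. Unset Printing Implicit Defensive.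
Import Order.TTheory GRing.Theory Num.Theory.
Local Open Scope ring_scope.

Section Market.
Variables (R : realType) (n : nat).

(* A deterministic mechanism: maps reported type vectors to a winning set
   and prices (prices of agents outside the winning set are ignored: they pay 0). *)
Record det_mech := DetMech {
  alloc : ('I_n -> R) -> {set 'I_n};
  price : ('I_n -> R) -> 'I_n -> R }.

Definition valuation (w : 'I_n -> {set 'I_n} -> R) (i : 'I_n) (ti : R)
  (S : {set 'I_n}) : R := ti * w i S.

Definition utility w (M : det_mech) (i : 'I_n) (ti : R) (r : 'I_n -> R) : R :=
  if i \in alloc M r then valuation w i ti (alloc M r) - price M r i else 0.

Definition nonneg_types (t : 'I_n -> R) := forall i, 0 <= t i.

Definition upd (t : 'I_n -> R) (i : 'I_n) (x : R) : 'I_n -> R :=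
  fun j => if j == i then x else t j.

Definition truthful w (M : det_mech) :=
  forall t, nonneg_types t -> forall i x, 0 <= x ->
    utility w M i (t i) (upd t i x) <= utility w M i (t i) t.

Definition indiv_rational w (M : det_mech) :=
  forall t, nonneg_types t -> forall i, 0 <= utility w M i (t i) t.

Definition revenue (M : det_mech) (t : 'I_n -> R) : R :=
  \sum_(i in alloc M t) price M t i.

Definition admissible_weights (w : 'I_n -> {set 'I_n} -> R) :=
  [/\ (forall i S, 0 <= w i S),
      (forall i (S : {set 'I_n}), i \notin S -> w i S = 0),
      (forall i t, 0 <= t -> forall S T : {set 'I_n}, S \subset T ->
         valuation w i t S <= valuation w i t T) &
      (forall i t, 0 <= t -> forall S T : {set 'I_n}, i \in S :&: T ->
         valuation w i t (S :|: T) <= valuation w i t S + valuation w i t T)].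

Definition F2_feasible w (t : 'I_n -> R) (c : R) (S : {set 'I_n}) :=
  [/\ 0 <= c, (2 <= #|S|)%N & forall i, i \in S -> c <= valuation w i (t i) S].

Definition is_F2 w (t : 'I_n -> R) (x : R) :=
  (exists c S, F2_feasible w t c S /\ x = c * #|S|%:R) /\
  (forall c (S : {set 'I_n}), F2_feasible w t c S -> c * #|S|%:R <= x).

End Market.

(* Two agents whose value t_i is realised only when both are served. For a
   truthful, individually rational deterministic mechanism, serving both is
   monotone along the diagonal reports (a, a), and once (b, b) is served,
   every price at (a, a) with a > b is at most b.  Along the grid a_j = K^j
   the normalized revenues Rev(a_j, a_j) / a_j therefore sum to at most
   2 + 2l/K for every such mechanism, hence in expectation for a random one.
   An alpha-approximation of F^(2)(a, a) = 2a, however, makes each expected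
   normalized revenue at least 2/alpha, which is too much once l > 2 alpha
   and K = l + 2. *)

From HB Require Import structures.
From mathcomp Require Import all_boot all_order all_algebra.
From mathcomp Require Import all_classical all_reals all_analysis.
From mathcomp Require Import measurable_realfun lra ring.
Set Implicit Arguments. Unset Strict Implicit. Unset Printing Implicit Defensive.
Import Order.TTheory GRing.Theory Num.Theory.
Local Open Scope ring_scope.

Section Integrability.
Local Open Scope ereal_scope.
Variables (d : measure_display) (T : measurableType d) (R : realType).

Lemma integrable_bounded_above (mu : {finite_measure set T -> \bar R})
    (f : T -> R) (C r : R) :
  measurable_fun setT f -> (forall x, (f x <= C)%R) ->
  r%:E <= \int[mu]_x (f x)%:E -> mu.-integrable setT (fun x => (f x)%:E).
Proof.
move=> mf fC r_le.
have mF : measurable_fun setT (fun x => (f x)%:E) by exact/measurable_EFinP.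
have pos_fin : \int[mu]_x (fun x => (f x)%:E)^\+ x \is a fin_num.
  rewrite ge0_fin_numE; last exact: integral_ge0.
  apply: (@le_lt_trans _ _ (\int[mu]_x (cst `|C|%:E) x)).
    apply: ge0_le_integral => //; first exact: measurable_funepos.
    move=> x _ /=; rewrite funeposE ge_max !lee_fin normr_ge0 andbT.
    exact: le_trans (fC x) (ler_norm _).
  rewrite integral_cst // -ge0_fin_numE ?fin_numM ?fin_num_measure //=.
  by rewrite mule_ge0 ?measure_ge0.
have neg_fin : \int[mu]_x (fun x => (f x)%:E)^\- x < +oo.
  rewrite ltey; apply/negP => /eqP neg_oo.
  by move: r_le; rewrite integralE neg_oo -(fineK pos_fin) leNgt ltNye.
apply/integrableP; split => //.
have -> : (fun x => `|(f x)%:E|) =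
    (fun x => (f x)%:E)^\+ \+ (fun x => (f x)%:E)^\- by rewrite -fune_abse.
rewrite ge0_integralD //; last 2 first.
- exact: measurable_funepos.
- exact: measurable_funeneg.
by apply: lte_add_pinfty => //; rewrite -ge0_fin_numE // integral_ge0.
Qed.

Lemma integral_sum_le_cst (P : probability T R) (m : nat) (f : 'I_m -> T -> R)
    (C : R) :
  (forall j, P.-integrable setT (fun x => (f j x)%:E)) ->
  (forall x, (\sum_j f j x <= C)%R) ->
  \sum_j \int[P]_x (f j x)%:E <= C%:E.
Proof.
move=> intf sumC; rewrite -(integral_sum measurableT intf).
apply: (@le_trans _ _ (\int[P]_x (cst C%:E) x)).
  apply: le_integral => //.
  - by apply: integrable_sum => // j _; exact: intf.
  - exact: finite_measure_integrable_cst.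
  by move=> x _; rewrite sumEFin lee_fin.
by rewrite integral_cst // -[X in X <= _]/(C%:E * P setT) probability_setT mule1.
Qed.

End Integrability.

Section AllOrNothing.
Variables (R : realType) (n : nat).
Implicit Types (t : 'I_n -> R) (i : 'I_n) (x : R).

Definition all_or_nothing : 'I_n -> {set 'I_n} -> R :=
  fun _ S => (S == [set: 'I_n])%:R.

Definition serves_all (M : det_mech R n) (t : 'I_n -> R) :=
  alloc M t == [set: 'I_n].

Lemma utility_serves_all M i x t : serves_all M t ->
  utility all_or_nothing M i x t = x - price M t i.
Proof.
by rewrite /utility /valuation /all_or_nothing => /eqP ->; rewrite inE eqxx mulr1.
Qed.

Lemma utility_not_serves_all M i x t : ~~ serves_all M t ->
  utility all_or_nothing M i x t = - (if i \in alloc M t then price M t i else 0).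
Proof.
rewrite /serves_all /utility /valuation /all_or_nothing => /negbTE ->.
by case: ifP; rewrite ?oppr0 // mulr0 sub0r.
Qed.

Lemma nonneg_types_upd t i x :
  nonneg_types t -> 0 <= x -> nonneg_types (upd t i x).
Proof. by move=> t_ge0 x_ge0 j; rewrite /upd; case: ifP. Qed.

Lemma upd_same t i x : upd t i x i = x.
Proof. by rewrite /upd eqxx. Qed.

Lemma upd_updK t i x : upd (upd t i x) i (t i) = t.
Proof. by apply: funext => j; rewrite /upd; case: eqP => // ->. Qed.

Variable M : det_mech R n.
Hypotheses (truthM : truthful all_or_nothing M)
           (irM : indiv_rational all_or_nothing M).

(* Raising one's bid cannot lose the grand coalition: otherwise the agent
   would profit by misreporting in one of the two directions. *)
Lemma serves_all_upd t i x : nonneg_types t -> 0 <= x -> t i < x ->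
  serves_all M t -> serves_all M (upd t i x).
Proof.
move=> t_ge0 x_ge0 lt_x all_t; apply/negPn/negP => not_all.
have up := truthM t_ge0 i x_ge0.
have down := truthM (nonneg_types_upd i t_ge0 x_ge0) i (t_ge0 i).
rewrite upd_updK upd_same in down.
rewrite !(utility_serves_all _ _ all_t) !(utility_not_serves_all _ _ not_all)
  in up down.
lra.
Qed.

Lemma price_le_upd t i x : nonneg_types t -> 0 <= x ->
  serves_all M t -> serves_all M (upd t i x) -> price M t i <= x.
Proof.
move=> t_ge0 x_ge0 all_t all_x.
have up := truthM t_ge0 i x_ge0.
have ir_x := irM (nonneg_types_upd i t_ge0 x_ge0) i.
rewrite upd_same in ir_x.
rewrite (utility_serves_all _ _ all_t) (utility_serves_all _ _ all_x) in up.
rewrite (utility_serves_all _ _ all_x) in ir_x.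
lra.
Qed.

Lemma revenue_serves_all t : serves_all M t -> revenue M t = \sum_i price M t i.
Proof.
by rewrite /revenue => /eqP ->; apply: eq_bigl => i; rewrite inE.
Qed.

Lemma revenue_le t : nonneg_types t ->
  revenue M t <= (serves_all M t)%:R * \sum_i t i.
Proof.
move=> t_ge0; have [all_t|not_all] := boolP (serves_all M t).
  rewrite mul1r revenue_serves_all //; apply: ler_sum => i _.
  by have := irM t_ge0 i; rewrite utility_serves_all // subr_ge0.
rewrite mul0r /revenue; apply: sumr_le0 => i i_in.
by have := irM t_ge0 i; rewrite utility_not_serves_all // i_in oppr_ge0.
Qed.

End AllOrNothing.

Arguments all_or_nothing : clear implicits.

Section TwoAgents.
Variable R : realType.
Implicit Types (a b A K : R) (i j : 'I_2).

Definition diag_types a : 'I_2 -> R := fun=> a.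

Lemma ord2_other i j k : i != j -> k != i -> k = j.
Proof. by case: i j k => [[|[|?]] ?] [[|[|?]] ?] [[|[|?]] ?] //= _ _; apply: val_inj. Qed.

Lemma upd_diag_swap i j a b : i != j ->
  upd (diag_types a) i b = upd (diag_types b) j a.
Proof.
move=> ij; apply: funext => k; rewrite /upd /diag_types.
have [->|ki] := eqVneq k i; first by rewrite (negbTE ij).
by rewrite (ord2_other ij ki) eqxx.
Qed.

Lemma upd_upd_diag i j a b : i != j ->
  upd (upd (diag_types b) i a) j a = diag_types a.
Proof.
move=> ij; apply: funext => k; rewrite /upd /diag_types.
have [//|kj] := eqVneq k j.
have ji : j != i by rewrite eq_sym.
by rewrite (ord2_other ji kj) eqxx.
Qed.

Lemma sum_diag_types a : \sum_i diag_types a i = 2 * a.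
Proof. by rewrite sumr_const card_ord mulr_natl. Qed.

Variable M : det_mech R 2.
Hypotheses (truthM : truthful (all_or_nothing R 2) M)
           (irM : indiv_rational (all_or_nothing R 2) M).

Local Notation served a := (serves_all M (diag_types a)).

Lemma served_diag_mono a b : 0 <= b -> b < a -> served b -> served a.
Proof.
move=> b_ge0 lt_ba served_b; have a_ge0 : 0 <= a by lra.
have ij : ord0 != ord_max :> 'I_2 by [].
rewrite -(upd_upd_diag a b ij).
apply: serves_all_upd => //; first exact: nonneg_types_upd.
by apply: serves_all_upd.
Qed.

(* Agent i facing the report vector (a, a) could report b instead, and
   (b, a) is served since (b, b) is; so its price is at most b. *)
Lemma revenue_diag_le a b : 0 <= b -> b < a -> served b ->
  revenue M (diag_types a) <= 2 * b.
Proof.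
move=> b_ge0 lt_ba served_b; have a_ge0 : 0 <= a by lra.
have served_a := served_diag_mono b_ge0 lt_ba served_b.
rewrite revenue_serves_all // -(sum_diag_types b); apply: ler_sum => i _.
apply: price_le_upd => //.
rewrite (upd_diag_swap _ _ (neq_lift i ord0)).
by apply: serves_all_upd.
Qed.

Lemma revenue_diag_le_served a : 0 <= a ->
  revenue M (diag_types a) <= (served a)%:R * (2 * a).
Proof. by move=> a_ge0; rewrite -sum_diag_types; exact: revenue_le. Qed.

(* The served indicators telescope once summed along a geometric grid. *)
Lemma normalized_revenue_step A K : 0 < A -> 1 < K ->
  revenue M (diag_types (A * K)) / (A * K) <=
  2 * (served (A * K))%:R - 2 * (served A)%:R + 2 / K.
Proof.
move=> A_gt0 K_gt1.
have AK_gt0 : 0 < A * K by apply: mulr_gt0 => //; lra.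
have lt_A_AK : A < A * K by nra.
rewrite ler_pdivrMr // mulrDl (_ : 2 / K * (A * K) = 2 * A); last by field; lra.
have [served_A|_] := boolP (served A).
  rewrite (served_diag_mono (ltW A_gt0) lt_A_AK served_A).
  have := revenue_diag_le (ltW A_gt0) lt_A_AK served_A; rewrite /=; lra.
have := revenue_diag_le_served (ltW AK_gt0).
case: (served (A * K)) => /=; lra.
Qed.

Lemma normalized_revenue_sum K l : 1 < K ->
  \sum_(j < l.+1) revenue M (diag_types (K ^+ j)) / K ^+ j <= 2 + 2 * l%:R / K.
Proof.
move=> K_gt1.
suff : \sum_(j < l.+1) revenue M (diag_types (K ^+ j)) / K ^+ j <=
       2 * (served (K ^+ l))%:R + 2 * l%:R / K.
  by case: (served _) => /=; lra.
elim: l => [|l IH].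
  rewrite big_ord1 expr0 divr1 mulr0 mul0r addr0.
  have := revenue_diag_le_served ler01; case: (served 1) => /=; lra.
rewrite big_ord_recr /= exprSr.
have := normalized_revenue_step (exprn_gt0 l (lt_trans ltr01 K_gt1)) K_gt1.
rewrite -[l.+1%:R]natr1; lra.
Qed.

End TwoAgents.

Lemma F2_diag_types (R : realType) (a : R) : 0 <= a ->
  is_F2 (all_or_nothing R 2) (diag_types a) (2 * a).
Proof.
have card2 : #|[set: 'I_2]| = 2%N by rewrite cardsT card_ord.
move=> a_ge0; split.
  exists a, [set: 'I_2]; split; last by rewrite card2 mulrC.
  split; rewrite ?card2 // => i _.
  by rewrite /valuation /all_or_nothing eqxx mulr1.
move=> c S [c_ge0 S_ge2 c_le].
have eS : S = [set: 'I_2].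
  by apply/eqP; rewrite eqEcard card2 S_ge2 andbT; apply/fintype.subsetP.
move: c_le; rewrite eS card2 mulrC => c_le; rewrite ler_wpM2l //.
by have := c_le ord0; rewrite /valuation /all_or_nothing eqxx mulr1 inE; apply.
Qed.

Lemma all_or_nothing2_admissible (R : realType) :
  admissible_weights (all_or_nothing R 2).
Proof.
have setT2 (S : {set 'I_2}) i j : i != j -> i \in S -> j \in S -> S = [set: 'I_2].
  move=> ij iS jS; apply/setP => k; rewrite inE.
  by have [->|ki] := eqVneq k i; last rewrite (ord2_other ij ki).
have w_ge0 i S : 0 <= all_or_nothing R 2 i S by rewrite ler0n.
split => //.
- move=> i S iS; apply/eqP; rewrite pnatr_eq0 eqb0; apply: contraNN iS => /eqP ->.
  by rewrite inE.
- move=> i t t_ge0 S T sST; rewrite /valuation; apply: ler_wpM2l => //.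
  rewrite /all_or_nothing; have [eS | //] := eqVneq S [set: 'I_2].
  by move: sST; rewrite eS finset.subTset => /eqP ->; rewrite eqxx.
- move=> i t t_ge0 S T; rewrite inE => /andP[iS iT]; rewrite /valuation -mulrDr.
  apply: ler_wpM2l => //; rewrite {1}/all_or_nothing.
  have [ST|] := eqVneq (S :|: T) [set: 'I_2]; last by rewrite addr_ge0.
  suff : (S == [set: 'I_2]) || (T == [set: 'I_2]).
    by case/orP => /eqP ->; rewrite /all_or_nothing eqxx ?lerDl ?lerDr.
  have j_in : lift i ord0 \in S :|: T by rewrite ST inE.
  move: j_in; rewrite inE => /orP[] jin.
    by rewrite (setT2 _ _ _ (neq_lift i ord0) iS jin) eqxx.
  by rewrite (setT2 _ _ _ (neq_lift i ord0) iT jin) eqxx orbT.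
Qed.

Section RandomMechanism.
Variables (R : realType) (d : measure_display) (Omega : measurableType d).
Variables (P : probability Omega R) (M : Omega -> det_mech R 2) (alpha : R).
Hypotheses
  (truthM : forall om, truthful (all_or_nothing R 2) (M om))
  (irM : forall om, indiv_rational (all_or_nothing R 2) (M om))
  (measM : forall t, measurable_fun setT (fun om => revenue (M om) t))
  (approxM : forall t, nonneg_types t -> forall x, is_F2 (all_or_nothing R 2) t x ->
     ((x / alpha)%:E <= \int[P]_om (revenue (M om) t)%:E)%E).

Let expected_revenue_ge a : 0 <= a ->
  ((2 * a / alpha)%:E <= \int[P]_om (revenue (M om) (diag_types a))%:E)%E.
Proof. by move=> a_ge0; apply/approxM/F2_diag_types. Qed.

Lemma revenue_diag_integrable a : 0 <= a ->
  P.-integrable setT (fun om => (revenue (M om) (diag_types a))%:E).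
Proof.
move=> a_ge0; apply: (integrable_bounded_above (C := 2 * a)) => //.
  move=> om; have := revenue_diag_le_served (irM om) a_ge0.
  by case: (serves_all _ _) => /=; lra.
exact: expected_revenue_ge.
Qed.

Lemma expected_normalized_revenue_ge a : 0 < a ->
  P.-integrable setT (fun om => (revenue (M om) (diag_types a) / a)%:E) /\
  ((2 / alpha)%:E <= \int[P]_om (revenue (M om) (diag_types a) / a)%:E)%E.
Proof.
move=> a_gt0.
have int_a := revenue_diag_integrable (ltW a_gt0).
have scale f : (fun om => (f om / a)%:E) = (fun om => (f om)%:E * (a^-1)%:E)%E.
  by apply: funext => om; rewrite EFinM.
rewrite scale; split; first exact: integrableZr.
rewrite integralZr // -(mulfK (lt0r_neq0 a_gt0) (2 / alpha)) EFinM.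
rewrite lee_pmul2r ?lte_fin ?invr_gt0 // mulrAC.
exact: expected_revenue_ge (ltW a_gt0).
Qed.

Lemma approximation_ratio_bound K l : 1 < K ->
  2 / alpha *+ l.+1 <= 2 + 2 * l%:R / K.
Proof.
move=> K_gt1.
have pow_gt0 (j : 'I_l.+1) : 0 < K ^+ j by apply: exprn_gt0; lra.
pose f (j : 'I_l.+1) om := revenue (M om) (diag_types (K ^+ j)) / K ^+ j.
have lower : (\sum_(j < l.+1) (2 / alpha)%:E <= \sum_j \int[P]_om (f j om)%:E)%E.
  by apply: lee_sum => j _; have [] := expected_normalized_revenue_ge (pow_gt0 j).
have upper : (\sum_j \int[P]_om (f j om)%:E <= (2 + 2 * l%:R / K)%:E)%E.
  apply: integral_sum_le_cst => [j|om].
    by have [] := expected_normalized_revenue_ge (pow_gt0 j).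
  exact: normalized_revenue_sum.
by have := le_trans lower upper; rewrite sumEFin lee_fin sumr_const card_ord.
Qed.

End RandomMechanism.

Theorem theorem3 (R : realType) (alpha : R) : 1 <= alpha ->
  exists (n : nat) (w : 'I_n -> {set 'I_n} -> R),
    admissible_weights w /\
    ~ exists (d : measure_display) (Omega : measurableType d)
             (P : probability Omega R) (M : Omega -> det_mech R n),
        [/\ (forall om, truthful w (M om) /\ indiv_rational w (M om)),
            (forall t, measurable_fun setT (fun om => revenue (M om) t)) &
            (forall t, nonneg_types t -> forall x, is_F2 w t x ->
               ((x / alpha)%:E <= \int[P]_om (revenue (M om) t)%:E)%E)].
Proof.
move=> alpha_ge1.
exists 2%N, (all_or_nothing R 2); split; first exact: all_or_nothing2_admissible.
case=> d [T [P [M [mechM measM approxM]]]].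
have [N N_gt] : exists N : nat, 2 * alpha < N%:R.
  by exists (Num.bound (2 * alpha)); apply: archi_boundP; lra.
have K_gt1 : (1 : R) < N.+2%:R by rewrite ltr1n.
have ratio := approximation_ratio_bound (fun om => (mechM om).1)
  (fun om => (mechM om).2) measM approxM N K_gt1.
have ratio_gt : 2 + 2 < 2 / alpha *+ N.+1.
  rewrite -[2 / alpha *+ _]mulr_natr mulrAC ltr_pdivlMr; last lra.
  rewrite -natr1; lra.
have grid_lt : (2 : R) + 2 * N%:R / N.+2%:R < 2 + 2.
  by rewrite ltrD2l ltr_pdivrMr ?ltr0n // -!natrM ltr_nat ltn_pmul2l // ltnS leqnSn.
by have := lt_trans (lt_le_trans ratio_gt ratio) grid_lt; rewrite ltxx.
Qed.
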